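(* Let $H$ be a group and $\Delta$ an angled $H$-graph with finitely many $H$-orbits of cells. Let $\Delta_1,\dots,\Delta_\ell$ be representatives of the $H$-orbits of connected components of $\Delta$, and let $H_i$ be the stabilizer of $\Delta_i$. If $\kappa(H_i,\Delta_i)\le\pi\cdot|H_i|^{-1}$ for $1\le i\le\ell$, then $\kappa(H,\Delta)\le\kappa(H_i,\Delta_i)$ for $1\le i\le\ell$.
   Context: An angled $K$-graph is a graph $\Gamma$ with a $K$-action (without inversions) and a $K$-invariant map $\measuredangle$ from edges to $\mathbb R$. For a group $K$, $|K|^{-1}=1/|K|$ if $K$ is finite and $0$ otherwise. For a cocompact angled $K$-graph, $\kappa(K,\Gamma)=2\pi|K|^{-1}-\sum_{v}\pi|K_v|^{-1}+\sum_{e}(\pi-\measuredangle(e))|K_e|^{-1}$, with sums over representatives of the $K$-orbits of vertices and of edges and $K_v,K_e$ their stabilizers. *)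

From Stdlib Require Import Reals List Lia Relations ClassicalEpsilon.
Import ListNotations.
Open Scope R_scope.

Record Group := {
  gcar :> Type;
  gmul : gcar -> gcar -> gcar;
  gone : gcar;
  ginv : gcar -> gcar;
  gmulA : forall a b c, gmul a (gmul b c) = gmul (gmul a b) c;
  gmul1 : forall a, gmul gone a = a;
  gmulV : forall a, gmul (ginv a) a = gone
}.

(** An angled H-graph.  Graphs may have loops and multiple edges.  Since the
    action is without inversions, each edge carries an H-invariant orientation
    (src, tgt) preserved by the action. *)
Record angled_graph (H : Group) := {
  V : Type;
  E : Type;
  src : E -> V;
  tgt : E -> V;
  actV : H -> V -> V;
  actE : H -> E -> E;
  actV1 : forall v, actV (gone H) v = v;
  actVM : forall g h v, actV (gmul H g h) v = actV g (actV h v);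
  actE1 : forall e, actE (gone H) e = e;
  actEM : forall g h e, actE (gmul H g h) e = actE g (actE h e);
  act_src : forall h e, src (actE h e) = actV h (src e);
  act_tgt : forall h e, tgt (actE h e) = actV h (tgt e);
  angle : E -> R;
  angle_inv : forall h e, angle (actE h e) = angle e
}.
Arguments V {H}. Arguments E {H}. Arguments src {H}. Arguments tgt {H}.
Arguments actV {H}. Arguments actE {H}. Arguments angle {H}.

(** Cardinality: |S|^{-1} = 1/|S| if S finite, 0 otherwise. *)
Definition has_card {T : Type} (S : T -> Prop) (n : nat) : Prop :=
  exists l : list T, NoDup l /\ length l = n /\ (forall x, S x <-> In x l).

Definition inv_card {T : Type} (S : T -> Prop) : R :=
  match excluded_middle_informative (exists n, has_card S n) with
  | left h => / INR (proj1_sig (constructive_indefinite_description _ h))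
  | right _ => 0
  end.

Definition orbit_reps {H : Group} {X : Type} (K : H -> Prop)
  (act : H -> X -> X) (S : X -> Prop) (l : list X) : Prop :=
  (forall x, In x l -> S x) /\
  (forall x, S x -> exists r k, In r l /\ K k /\ act k r = x) /\
  (forall i j r s k, nth_error l i = Some r -> nth_error l j = Some s ->
     K k -> act k r = s -> i = j).

Definition stabV {H : Group} (D : angled_graph H) (K : H -> Prop) (v : V D) :
  H -> Prop := fun k => K k /\ actV D k v = v.
Definition stabE {H : Group} (D : angled_graph H) (K : H -> Prop) (e : E D) :
  H -> Prop := fun k => K k /\ actE D k e = e.

Definition sumR {T : Type} (f : T -> R) (l : list T) : R :=
  fold_right Rplus 0 (map f l).

Definition kappa_reps {H : Group} (D : angled_graph H) (K : H -> Prop)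
  (rv : list (V D)) (re : list (E D)) : R :=
  2 * PI * inv_card K
  - sumR (fun v => PI * inv_card (stabV D K v)) rv
  + sumR (fun e => (PI - angle D e) * inv_card (stabE D K e)) re.

Definition cocompact {H : Group} (D : angled_graph H) (K : H -> Prop)
  (Vs : V D -> Prop) (Es : E D -> Prop) : Prop :=
  exists (rv : list (V D)) (re : list (E D)),
    orbit_reps K (actV D) Vs rv /\ orbit_reps K (actE D) Es re.

(** kappa(K, (Vs,Es)) for the action of the subgroup K on the subgraph
    (Vs, Es); representatives are chosen (value is independent of the choice).
    Defaults to 0 when the action is not cocompact (never used then). *)
Definition kappa {H : Group} (D : angled_graph H) (K : H -> Prop)
  (Vs : V D -> Prop) (Es : E D -> Prop) : R :=
  match excluded_middle_informative (cocompact D K Vs Es) with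
  | left h =>
      let w := constructive_indefinite_description _ h in
      let w2 := constructive_indefinite_description _ (proj2_sig w) in
      kappa_reps D K (proj1_sig w) (proj1_sig w2)
  | right _ => 0
  end.

Definition allH {H : Group} : H -> Prop := fun _ => True.
Definition allV {H : Group} (D : angled_graph H) : V D -> Prop := fun _ => True.
Definition allE {H : Group} (D : angled_graph H) : E D -> Prop := fun _ => True.

Definition adj {H : Group} (D : angled_graph H) (u w : V D) : Prop :=
  exists e, (src D e = u /\ tgt D e = w) \/ (src D e = w /\ tgt D e = u).
Definition connected {H : Group} (D : angled_graph H) : V D -> V D -> Prop :=
  clos_refl_trans (V D) (adj D).

Definition compV {H : Group} (D : angled_graph H) (v : V D) : V D -> Prop :=
  fun w => connected D v w.
Definition compE {H : Group} (D : angled_graph H) (v : V D) : E D -> Prop :=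
  fun e => connected D v (src D e).

(** Stabilizer in H of the component of v: h·Comp(v) = Comp(v). *)
Definition stab_comp {H : Group} (D : angled_graph H) (v : V D) : H -> Prop :=
  fun h => connected D v (actV D h v).

Definition component_orbit_reps {H : Group} (D : angled_graph H)
  (reps : list (V D)) : Prop :=
  (forall w, exists r h, In r reps /\ connected D (actV D h r) w) /\
  (forall i j r s h, nth_error reps i = Some r -> nth_error reps j = Some s ->
     connected D (actV D h r) s -> i = j).

(* An H-orbit of cells of the graph lies in the translates of exactly one
   component Delta_i and meets Delta_i in a single H_i-orbit, along which the
   stabilizers in H and in H_i coincide.  Hence the vertex and edge part of
   kappa is additive:
     kappa(H,Delta) - 2 pi |H|^-1 = sum_i (kappa(H_i,Delta_i) - 2 pi |H_i|^-1).
   The hypothesis makes each summand at most - pi |H_i|^-1 <= 0, so dropping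
   all summands but the i-th and using |H|^-1 <= |H_i|^-1 gives the claim. *)

From Stdlib Require Import Reals List Lra Lia Relations Classical ClassicalEpsilon FinFun.
Open Scope R_scope.

Lemma gmulVr (H : Group) (a : H) : gmul H a (ginv H a) = gone H.
Proof.
  rewrite <- (gmul1 H (gmul H a (ginv H a))), <- (gmulV H (ginv H a)) at 1.
  rewrite <- gmulA, (gmulA H (ginv H a) a), gmulV, gmul1, gmulV.
  reflexivity.
Qed.

Lemma gmul1r (H : Group) (a : H) : gmul H a (gone H) = a.
Proof. rewrite <- (gmulV H a), gmulA, gmulVr, gmul1. reflexivity. Qed.

Section SumR.
Context {T : Type}.

Lemma sumR_cons (f : T -> R) a l : sumR f (a :: l) = f a + sumR f l.
Proof. reflexivity. Qed.

Lemma sumR_app (f : T -> R) l1 l2 : sumR f (l1 ++ l2) = sumR f l1 + sumR f l2.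
Proof.
  induction l1 as [|a l1 IH]; simpl; [unfold sumR; simpl; lra|].
  rewrite !sumR_cons, IH. lra.
Qed.

Lemma sumR_flat_map {U} (f : T -> R) (g : U -> list T) l :
  sumR f (flat_map g l) = sumR (fun w => sumR f (g w)) l.
Proof. induction l as [|a l IH]; simpl; [reflexivity|]. rewrite sumR_app, IH. reflexivity. Qed.

Lemma sumR_ext_in (f g : T -> R) l :
  (forall x, In x l -> f x = g x) -> sumR f l = sumR g l.
Proof.
  induction l as [|a l IH]; intros Hfg; [reflexivity|].
  rewrite !sumR_cons, Hfg, IH; simpl; auto.
  intros x Hx; apply Hfg; simpl; auto.
Qed.

Lemma sumR_minus (f g : T -> R) l : sumR (fun x => f x - g x) l = sumR f l - sumR g l.
Proof. induction l as [|a l IH]; [unfold sumR; simpl; lra|]. rewrite !sumR_cons, IH. lra. Qed.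

Lemma sumR_nonpos (f : T -> R) l : (forall x, In x l -> f x <= 0) -> sumR f l <= 0.
Proof.
  induction l as [|a l IH]; intros Hf; [unfold sumR; simpl; lra|].
  rewrite sumR_cons. specialize (IH (fun x Hx => Hf x (or_intror Hx))).
  specialize (Hf a (or_introl eq_refl)). lra.
Qed.

Lemma sumR_le_term (f : T -> R) l a :
  (forall x, In x l -> f x <= 0) -> In a l -> sumR f l <= f a.
Proof.
  intros Hf Ha. destruct (in_split _ _ Ha) as [l1 [l2 ->]].
  rewrite sumR_app, sumR_cons.
  assert (sumR f l1 <= 0) by (apply sumR_nonpos; intros x Hx; apply Hf, in_or_app; auto).
  assert (sumR f l2 <= 0) by (apply sumR_nonpos; intros x Hx; apply Hf, in_or_app; simpl; auto).
  lra.
Qed.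

End SumR.

Section InvCard.
Context {T : Type}.

Lemma has_card_unique (S : T -> Prop) n m : has_card S n -> has_card S m -> n = m.
Proof.
  intros [l1 [N1 [<- I1]]] [l2 [N2 [<- I2]]].
  apply Nat.le_antisymm; apply NoDup_incl_length; auto; intros x Hx.
  - apply I2, I1, Hx.
  - apply I1, I2, Hx.
Qed.

Lemma inv_card_of (S : T -> Prop) n : has_card S n -> inv_card S = / INR n.
Proof.
  intros Hn. unfold inv_card. destruct (excluded_middle_informative _) as [e|e].
  - destruct (constructive_indefinite_description _ e) as [m Hm]; simpl.
    rewrite (has_card_unique S m n); auto.
  - exfalso; eauto.
Qed.

Lemma inv_card_infinite (S : T -> Prop) : ~ (exists n, has_card S n) -> inv_card S = 0.
Proof.
  intros Hn. unfold inv_card.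
  destruct (excluded_middle_informative _); [contradiction|reflexivity].
Qed.

Lemma inv_card_nonneg (S : T -> Prop) : 0 <= inv_card S.
Proof.
  destruct (classic (exists n, has_card S n)) as [[n Hn]|Hn].
  - rewrite (inv_card_of S n Hn). destruct n as [|n].
    + simpl; rewrite Rinv_0; lra.
    + left; apply Rinv_0_lt_compat, lt_0_INR; lia.
  - rewrite inv_card_infinite; auto; lra.
Qed.

Lemma has_card_bij (S S' : T -> Prop) (f g : T -> T)
  (Hf : forall x, S x -> S' (f x)) (Hg : forall y, S' y -> S (g y))
  (Hgf : forall x, g (f x) = x) (Hfg : forall y, f (g y) = y) n :
  has_card S n -> has_card S' n.
Proof.
  intros [l [Nl [<- Il]]]. exists (map f l). split; [|split].
  - apply Injective_map_NoDup; auto.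
    intros x y E. rewrite <- (Hgf x), <- (Hgf y), E. reflexivity.
  - apply length_map.
  - intros y; split.
    + intros Sy. rewrite <- (Hfg y). apply in_map, Il, Hg, Sy.
    + intros Hin. apply in_map_iff in Hin as [x [<- Hx]]. apply Hf, Il, Hx.
Qed.

Lemma inv_card_bij (S S' : T -> Prop) (f g : T -> T)
  (Hf : forall x, S x -> S' (f x)) (Hg : forall y, S' y -> S (g y))
  (Hgf : forall x, g (f x) = x) (Hfg : forall y, f (g y) = y) :
  inv_card S = inv_card S'.
Proof.
  destruct (classic (exists n, has_card S n)) as [[n Hn]|Hn].
  - rewrite (inv_card_of S n Hn), (inv_card_of S' n); auto.
    apply (has_card_bij S S' f g); auto.
  - rewrite !inv_card_infinite; auto.
    intros [n Hn']. apply Hn. exists n. apply (has_card_bij S' S g f); auto.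
Qed.

Lemma inv_card_eqv (S S' : T -> Prop) : (forall x, S x <-> S' x) -> inv_card S = inv_card S'.
Proof. intros HS. apply (inv_card_bij S S' (fun x => x) (fun x => x)); firstorder. Qed.

Lemma inv_card_full_le (S : T -> Prop) (x0 : T) :
  S x0 -> inv_card (fun _ : T => True) <= inv_card S.
Proof.
  intros Sx0.
  destruct (classic (exists n, has_card (fun _ : T => True) n)) as [[n Hn]|Hn].
  - pose proof Hn as [l [Nl [Ll Il]]].
    set (lS := filter (fun x => if excluded_middle_informative (S x) then true else false) l).
    assert (In_lS : forall x, In x lS <-> S x).
    { intros x. unfold lS. rewrite filter_In.
      destruct (excluded_middle_informative (S x)); split; try tauto.
      - split; [apply Il|]; auto.
      - intros [_ E]; discriminate. }
    assert (HS : has_card S (length lS)).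
    { exists lS. split; [apply NoDup_filter; auto|split; auto]. firstorder. }
    rewrite (inv_card_of _ n Hn), (inv_card_of S _ HS).
    assert (H1 : (1 <= length lS)%nat).
    { destruct lS as [|? ?]; [destruct (proj2 (In_lS x0) Sx0)|simpl; lia]. }
    assert (H2 : (length lS <= n)%nat).
    { rewrite <- Ll. apply NoDup_incl_length; [apply NoDup_filter; auto|].
      intros x _; apply Il; auto. }
    apply Rinv_le_contravar; [apply lt_0_INR; lia|apply le_INR; lia].
  - rewrite inv_card_infinite; auto. apply inv_card_nonneg.
Qed.

End InvCard.

Section OrdPairs.
Context {X : Type}.
Implicit Types (Rl : X -> X -> Prop) (l : list X).

Lemma ForallOrdPairs_impl Rl Rl' l :
  (forall a b, In a l -> In b l -> Rl a b -> Rl' a b) ->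
  ForallOrdPairs Rl l -> ForallOrdPairs Rl' l.
Proof.
  intros Himp Hl. induction Hl as [|a l Ha Hl IH]; constructor.
  - rewrite Forall_forall in *. intros b Hb. apply Himp; simpl; auto.
  - apply IH. intros x y Hx Hy. apply Himp; simpl; auto.
Qed.

Lemma ForallOrdPairs_app Rl l1 l2 :
  ForallOrdPairs Rl l1 -> ForallOrdPairs Rl l2 ->
  (forall a b, In a l1 -> In b l2 -> Rl a b) -> ForallOrdPairs Rl (l1 ++ l2).
Proof.
  induction 1 as [|a l Ha Hl IH]; intros H2 Hc; simpl; auto.
  constructor.
  - apply Forall_app; split; auto.
    apply Forall_forall. intros b Hb. apply Hc; simpl; auto.
  - apply IH; auto. intros x y Hx Hy. apply Hc; simpl; auto.
Qed.

Lemma ForallOrdPairs_filter Rl (b : X -> bool) l :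
  ForallOrdPairs Rl l -> ForallOrdPairs Rl (filter b l).
Proof.
  induction 1 as [|a l Ha Hl IH]; simpl; [constructor|].
  destruct (b a); auto. constructor; auto.
  rewrite Forall_forall in *. intros x Hx. apply filter_In in Hx. apply Ha; tauto.
Qed.

Lemma ForallOrdPairs_map Rl Rl' (f : X -> X) l :
  (forall x y, Rl x y -> Rl' (f x) (f y)) ->
  ForallOrdPairs Rl l -> ForallOrdPairs Rl' (map f l).
Proof.
  intros Hf. induction 1 as [|a l Ha Hl IH]; simpl; constructor; auto.
  apply Forall_map. eapply Forall_impl; [|exact Ha]. auto.
Qed.

Lemma ForallOrdPairs_flat_map {Y} (Rl : X -> X -> Prop) (Rc : Y -> Y -> Prop)
  (g : Y -> list X) (ws : list Y) :
  ForallOrdPairs Rc ws -> (forall w, In w ws -> ForallOrdPairs Rl (g w)) ->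
  (forall w w' a b, In w ws -> In w' ws -> In a (g w) -> In b (g w') ->
     Rc w w' -> Rl a b) ->
  ForallOrdPairs Rl (flat_map g ws).
Proof.
  induction 1 as [|w ws Hw Hws IH]; intros Hg Hc; simpl; [constructor|].
  apply ForallOrdPairs_app.
  - apply Hg; simpl; auto.
  - apply IH; [intros; apply Hg; simpl; auto|].
    intros w1 w2 a b Hw1 Hw2. apply Hc; simpl; auto.
  - intros a b Ha Hb. apply in_flat_map in Hb as [w' [Hw' Hb]].
    rewrite Forall_forall in Hw. apply (Hc w w'); simpl; auto.
Qed.

Lemma ForallOrdPairs_remove Rl l1 a l2 :
  ForallOrdPairs Rl (l1 ++ a :: l2) ->
  ForallOrdPairs Rl (l1 ++ l2) /\
  (forall y, In y l1 -> Rl y a) /\ (forall y, In y l2 -> Rl a y).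
Proof.
  induction l1 as [|b l1 IH]; simpl; intros Hl.
  - inversion Hl as [|? ? Ha Hl2]; subst. rewrite Forall_forall in Ha. tauto.
  - inversion Hl as [|? ? Hb Hl']; subst. destruct (IH Hl') as [H12 [H1 H2]].
    rewrite Forall_forall in Hb. split; [|split].
    + constructor; auto. apply Forall_forall. intros c Hc.
      apply Hb, in_or_app. apply in_app_or in Hc. simpl; tauto.
    + intros y [<-|Hy]; auto. apply Hb, in_or_app; simpl; auto.
    + auto.
Qed.

Lemma ForallOrdPairs_nth Rl l :
  (forall i j r s, nth_error l i = Some r -> nth_error l j = Some s -> Rl r s -> i = j) ->
  ForallOrdPairs (fun a b => ~ Rl a b) l.
Proof.
  induction l as [|a l IH]; intros Hn; constructor.
  - apply Forall_forall. intros b Hb HR. destruct (In_nth_error l b Hb) as [j Hj].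
    discriminate (Hn 0%nat (S j) a b eq_refl Hj HR).
  - apply IH. intros i j r s Hi Hj Hr.
    assert (S i = S j) by exact (Hn (S i) (S j) r s Hi Hj Hr). lia.
Qed.

Lemma nth_unique_ForallOrdPairs Rl l :
  (forall x y, Rl x y -> Rl y x) -> ForallOrdPairs (fun a b => ~ Rl a b) l ->
  forall i j r s, nth_error l i = Some r -> nth_error l j = Some s -> Rl r s -> i = j.
Proof.
  intros Hsym Hl. induction Hl as [|a l Ha Hl IH]; intros i j r s Hi Hj Hr.
  - destruct i; discriminate.
  - rewrite Forall_forall in Ha. destruct i, j; simpl in *; auto.
    + injection Hi as <-. destruct (Ha s (nth_error_In _ _ Hj) Hr).
    + injection Hj as <-. destruct (Ha r (nth_error_In _ _ Hi) (Hsym _ _ Hr)).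
    + f_equal. eapply IH; eauto.
Qed.

Definition transversal Rl (S : X -> Prop) l : Prop :=
  (forall x, In x l -> S x) /\ (forall x, S x -> exists r, In r l /\ Rl r x) /\
  ForallOrdPairs (fun a b => ~ Rl a b) l.

Section Transversal.
Variable Rl : X -> X -> Prop.
Hypothesis Rl_sym : forall x y, Rl x y -> Rl y x.
Hypothesis Rl_trans : forall x y z, Rl x y -> Rl y z -> Rl x z.

Lemma sumR_transversal (f : X -> R) (f_class : forall x y, Rl x y -> f x = f y) :
  forall S l l', transversal Rl S l -> transversal Rl S l' -> sumR f l = sumR f l'.
Proof.
  intros S l; revert S. induction l as [|a l IH]; intros S l' [Hl [Hcov Hnd]] [Hl' [Hcov' Hnd']].
  - destruct l' as [|b l'']; [reflexivity|].
    destruct (Hcov b (Hl' b (or_introl eq_refl))) as [r [[] _]].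
  - destruct (Hcov' a (Hl a (or_introl eq_refl))) as [a' [Ha' Ra'a]].
    destruct (in_split _ _ Ha') as [l1 [l2 ->]].
    inversion Hnd as [|? ? Hna Hnl]; subst. rewrite Forall_forall in Hna.
    destruct (ForallOrdPairs_remove _ l1 a' l2 Hnd') as [Hnd12 [Hn1 Hn2]].
    assert (Hna' : forall y, In y (l1 ++ l2) -> ~ Rl a y).
    { intros y Hy Ray. apply in_app_or in Hy.
      assert (Ra'y : Rl a' y) by eauto.
      destruct Hy as [Hy|Hy]; [apply (Hn1 y)|apply (Hn2 y)]; auto. }
    (* the class of a is removed from both transversals *)
    assert (Hs : sumR f l = sumR f (l1 ++ l2)).
    { apply (IH (fun x => S x /\ ~ Rl a x)); split; [| split | | split]; auto.
      - intros x Hx. split; [apply Hl; right|apply Hna]; auto.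
      - intros x [Sx Nx]. destruct (Hcov x Sx) as [r [[<-|Hr] Rr]]; [contradiction|eauto].
      - intros x Hx. split; [|apply Hna'; auto].
        apply Hl'. apply in_app_or in Hx. apply in_or_app. simpl; tauto.
      - intros x [Sx Nx]. destruct (Hcov' x Sx) as [r [Hr Rr]].
        apply in_app_or in Hr. destruct Hr as [Hr|[<-|Hr]].
        + exists r; split; auto; apply in_or_app; auto.
        + exfalso. apply Nx. eauto.
        + exists r; split; auto; apply in_or_app; auto. }
    rewrite sumR_cons, Hs, !sumR_app, sumR_cons, (f_class a' a Ra'a). lra.
Qed.

End Transversal.
End OrdPairs.

Section GroupAction.
Context {H : Group} {X : Type} (act : H -> X -> X).
Hypothesis act1 : forall x, act (gone H) x = x.
Hypothesis actM : forall g h x, act (gmul H g h) x = act g (act h x).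

Definition orbit_rel (K : H -> Prop) (x y : X) : Prop := exists k, K k /\ act k x = y.

Lemma act_ginv_l h x : act (ginv H h) (act h x) = x.
Proof. rewrite <- actM, gmulV, act1. reflexivity. Qed.

Lemma act_ginv_r h x : act h (act (ginv H h) x) = x.
Proof. rewrite <- actM, gmulVr, act1. reflexivity. Qed.

Lemma orbit_rel_sym x y : orbit_rel allH x y -> orbit_rel allH y x.
Proof. intros [h [_ <-]]. exists (ginv H h). split; [exact I|apply act_ginv_l]. Qed.

Lemma orbit_rel_trans x y z :
  orbit_rel allH x y -> orbit_rel allH y z -> orbit_rel allH x z.
Proof. intros [h [_ <-]] [k [_ <-]]. exists (gmul H k h). split; [exact I|apply actM]. Qed.

Lemma transversal_orbit_reps K S l :
  orbit_reps K act S l -> transversal (orbit_rel K) S l.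
Proof.
  intros [Hl [Hcov Hu]]. split; [|split]; auto.
  - intros x Sx. destruct (Hcov x Sx) as [r [k [Hr [Kk Hk]]]]. exists r. split; auto.
    exists k; auto.
  - apply ForallOrdPairs_nth. intros i j r s Hi Hj [k [Kk Hk]]. eapply Hu; eauto.
Qed.

Lemma inv_card_stab_act g x :
  inv_card (fun k => @allH H k /\ act k (act g x) = act g x) =
  inv_card (fun k => @allH H k /\ act k x = x).
Proof.
  apply (inv_card_bij _ _ (fun k => gmul H (gmul H (ginv H g) k) g)
                          (fun k => gmul H (gmul H g k) (ginv H g))).
  - intros k [_ Hk]. split; [exact I|].
    rewrite !actM, Hk. apply act_ginv_l.
  - intros k [_ Hk]. split; [exact I|].
    rewrite !actM, act_ginv_l, Hk. reflexivity.
  - intros k. rewrite <- !gmulA, gmulVr, gmul1r, gmulA, gmulVr, gmul1. reflexivity.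
  - intros k. rewrite <- !gmulA, gmulV, gmul1r, gmulA, gmulV, gmul1. reflexivity.
Qed.

Section Restriction.
Variables (K : H -> Prop) (S : X -> Prop).
Hypothesis K_of_S : forall x h, S x -> S (act h x) -> K h.

Lemma inv_card_stab_restrict x :
  S x -> inv_card (fun k => @allH H k /\ act k x = x) = inv_card (fun k => K k /\ act k x = x).
Proof.
  intros Sx. apply inv_card_eqv. intros k. split.
  - intros [_ Hk]. split; auto. apply (K_of_S x); auto. rewrite Hk; auto.
  - intros [_ Hk]. split; [exact I|auto].
Qed.

Lemma orbit_reps_restrict rv :
  orbit_reps allH act (fun _ => True) rv -> exists l, orbit_reps K act S l.
Proof.
  intros Hrv. destruct (transversal_orbit_reps _ _ _ Hrv) as [_ [Hcov Hnd]].
  set (meets := fun r => exists h, S (act h r)).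
  assert (Hpick : exists pick : X -> H, forall r, meets r -> S (act (pick r) r)).
  { apply (choice (fun r h => meets r -> S (act h r))). intros r.
    destruct (classic (meets r)) as [[h Sh]|Nm].
    - exists h; auto.
    - exists (gone H); contradiction. }
  destruct Hpick as [pick Hpick].
  set (b := fun r => if excluded_middle_informative (meets r) then true else false).
  assert (Hb : forall r, b r = true <-> meets r).
  { intros r; unfold b; destruct (excluded_middle_informative (meets r)); split;
      auto; discriminate. }
  set (move := fun r => act (pick r) r).
  exists (map move (filter b rv)). split; [|split].
  - intros x Hx. apply in_map_iff in Hx as [r [<- Hr]]. apply filter_In in Hr.
    apply Hpick, Hb; tauto.
  - intros x Sx. destruct (Hcov x I) as [r [Hr [k [_ <-]]]].
    assert (Mr : meets r) by (exists k; auto).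
    exists (move r), (gmul H k (ginv H (pick r))).
    assert (Eq : act (gmul H k (ginv H (pick r))) (move r) = act k r).
    { unfold move. rewrite actM, act_ginv_l. reflexivity. }
    split; [|split]; auto.
    + apply in_map, filter_In. split; auto. apply Hb; auto.
    + apply (K_of_S (move r)); [apply Hpick; auto|rewrite Eq; auto].
  - intros i j r s k Hi Hj _ Hk.
    apply (nth_unique_ForallOrdPairs (orbit_rel allH) (map move (filter b rv))
             orbit_rel_sym) with (r := r) (s := s); auto.
    + apply (ForallOrdPairs_map (fun a b => ~ orbit_rel allH a b));
        [|apply ForallOrdPairs_filter; exact Hnd].
      intros x y Nxy Rxy. apply Nxy.
      apply (orbit_rel_trans _ (move x)); [exists (pick x); split; [exact I|auto]|].
      apply (orbit_rel_trans _ (move y)); auto.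
      apply orbit_rel_sym. exists (pick y); split; [exact I|auto].
    + exists k; split; [exact I|auto].
Qed.

End Restriction.
End GroupAction.

Section Components.
Context {H : Group} (D : angled_graph H).

Lemma connected_sym u w : connected D u w -> connected D w u.
Proof.
  induction 1 as [u w [e [[<- <-]|[<- <-]]]| |]; try (apply rt_step; exists e; auto).
  - apply rt_refl.
  - eapply rt_trans; eauto.
Qed.

Lemma connected_act h u w : connected D u w -> connected D (actV D h u) (actV D h w).
Proof.
  induction 1 as [u w [e [[<- <-]|[<- <-]]]| |].
  - apply rt_step. exists (actE D h e). left. rewrite act_src, act_tgt. auto.
  - apply rt_step. exists (actE D h e). right. rewrite act_src, act_tgt. auto.
  - apply rt_refl.
  - eapply rt_trans; eauto.
Qed.

Lemma stab_comp_one w : stab_comp D w (gone H).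
Proof. unfold stab_comp. rewrite actV1. apply rt_refl. Qed.

(* Cells of [D] (vertices, or edges via their source) are placed in components
   through an equivariant map [p] to the vertices. *)
Section Cells.
Context {X : Type} (act : H -> X -> X) (p : X -> V D).
Hypothesis act1 : forall x, act (gone H) x = x.
Hypothesis actM : forall g h x, act (gmul H g h) x = act g (act h x).
Hypothesis p_act : forall h x, p (act h x) = actV D h (p x).

Lemma stab_comp_of_connected w x h :
  connected D w (p x) -> connected D w (p (act h x)) -> stab_comp D w h.
Proof.
  intros Cx Chx. unfold stab_comp. apply connected_sym.
  apply rt_trans with (p (act h x)).
  - rewrite p_act. apply connected_act, Cx.
  - apply connected_sym, Chx.
Qed.

Variables (reps : list (V D)) (rv : list X) (g : V D -> list X).
Hypothesis Hreps : component_orbit_reps D reps.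
Hypothesis Hrv : orbit_reps allH act (fun _ => True) rv.
Hypothesis Hg : forall w, In w reps ->
  orbit_reps (stab_comp D w) act (fun x => connected D w (p x)) (g w).

Lemma transversal_flat_map_components :
  transversal (orbit_rel act allH) (fun _ => True) (flat_map g reps).
Proof.
  split; [|split]; [auto| |].
  - intros x _. destruct (proj1 Hreps (p x)) as [r [h0 [Hr Hc]]].
    set (y := act (ginv H h0) x).
    assert (Cy : connected D r (p y)).
    { unfold y. rewrite p_act, <- (act_ginv_l (actV D) (actV1 _ D) (actVM _ D) h0 r).
      apply connected_act, Hc. }
    destruct (proj1 (proj2 (Hg r Hr)) y Cy) as [s [k [Hs [_ Hk]]]].
    exists s. split; [apply in_flat_map; eauto|].
    exists (gmul H h0 k). split; [exact I|].
    rewrite actM, Hk. apply (act_ginv_r act act1 actM).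
  - apply (ForallOrdPairs_flat_map _ (fun v w => ~ exists h, connected D (actV D h v) w)).
    + apply ForallOrdPairs_nth. intros i j r s Hi Hj [h Hh].
      eapply (proj2 Hreps); eauto.
    + intros w Hw.
      apply (ForallOrdPairs_impl (fun a b => ~ orbit_rel act (stab_comp D w) a b)).
      * intros a b Ha Hb Nab [h [_ Hh]]. apply Nab. exists h. split; auto.
        apply (stab_comp_of_connected w a); [apply (proj1 (Hg w Hw)), Ha|].
        rewrite Hh. apply (proj1 (Hg w Hw)), Hb.
      * exact (proj2 (proj2 (transversal_orbit_reps act _ _ _ (Hg w Hw)))).
    + intros w w' a b Hw Hw' Ha Hb Nww' [h [_ Hh]]. apply Nww'. exists h.
      apply rt_trans with (p b).
      * rewrite <- Hh, p_act. apply connected_act, (proj1 (Hg w Hw)), Ha.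
      * apply connected_sym, (proj1 (Hg w' Hw')), Hb.
Qed.

Lemma sumR_components (f : X -> R) (f_inv : forall h x, f (act h x) = f x) :
  sumR f rv = sumR (fun w => sumR f (g w)) reps.
Proof.
  rewrite <- sumR_flat_map.
  apply (sumR_transversal (orbit_rel act allH) (orbit_rel_sym act act1 actM)
           (orbit_rel_trans act actM) f) with (S := fun _ => True).
  - intros x y [h [_ <-]]. symmetry; apply f_inv.
  - apply transversal_orbit_reps, Hrv.
  - apply transversal_flat_map_components.
Qed.

Lemma sumR_stab_components (c : X -> R) (c_inv : forall h x, c (act h x) = c x) :
  sumR (fun x => c x * inv_card (fun k => allH k /\ act k x = x)) rv =
  sumR (fun w => sumR (fun x => c x * inv_card (fun k => stab_comp D w k /\ act k x = x))
                      (g w)) reps.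
Proof.
  rewrite sumR_components.
  - apply sumR_ext_in. intros w Hw. apply sumR_ext_in. intros x Hx.
    f_equal. apply (inv_card_stab_restrict act _ (fun x => connected D w (p x))).
    + intros y h; apply stab_comp_of_connected.
    + apply (proj1 (Hg w Hw)), Hx.
  - intros h x. rewrite c_inv, (inv_card_stab_act act act1 actM). reflexivity.
Qed.

End Cells.
End Components.

Section Kappa.
Context {H : Group} (D : angled_graph H).

Lemma kappa_of_cocompact K Vs Es :
  cocompact D K Vs Es -> exists rv re, orbit_reps K (actV D) Vs rv /\
    orbit_reps K (actE D) Es re /\ kappa D K Vs Es = kappa_reps D K rv re.
Proof.
  intros Hc. unfold kappa. destruct (excluded_middle_informative _) as [e|e]; [|contradiction].
  destruct (constructive_indefinite_description _ e) as [rv Hrv]; simpl.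
  destruct (constructive_indefinite_description _ Hrv) as [re Hre]; simpl.
  exists rv, re. tauto.
Qed.

Lemma cocompact_component w :
  cocompact D allH (allV D) (allE D) ->
  cocompact D (stab_comp D w) (compV D w) (compE D w).
Proof.
  intros [rv [re [Hrv Hre]]].
  destruct (orbit_reps_restrict (actV D) (actV1 _ D) (actVM _ D) _ (compV D w)
              (stab_comp_of_connected D (actV D) (fun x => x) (fun _ _ => eq_refl) w) rv Hrv)
    as [lv Hlv].
  destruct (orbit_reps_restrict (actE D) (actE1 _ D) (actEM _ D) _ (compE D w)
              (stab_comp_of_connected D (actE D) (src D) (act_src _ D) w) re Hre)
    as [le Hle].
  exists lv, le. auto.
Qed.

(* The part of [kappa] that is additive over the orbits of components. *)
Definition kappa_cells (K : H -> Prop) (Vs : V D -> Prop) (Es : E D -> Prop) : R :=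
  kappa D K Vs Es - 2 * PI * inv_card K.

Lemma kappa_cells_components reps :
  cocompact D allH (allV D) (allE D) -> component_orbit_reps D reps ->
  kappa_cells allH (allV D) (allE D) =
  sumR (fun w => kappa_cells (stab_comp D w) (compV D w) (compE D w)) reps.
Proof.
  intros Hcoc Hreps.
  destruct (kappa_of_cocompact _ _ _ Hcoc) as [rv [re [Hrv [Hre Hk]]]].
  destruct (choice (fun w (pr : list (V D) * list (E D)) =>
      orbit_reps (stab_comp D w) (actV D) (compV D w) (fst pr) /\
      orbit_reps (stab_comp D w) (actE D) (compE D w) (snd pr) /\
      kappa D (stab_comp D w) (compV D w) (compE D w) =
      kappa_reps D (stab_comp D w) (fst pr) (snd pr))) as [g Hg].
  { intros w. destruct (kappa_of_cocompact _ _ _ (cocompact_component w Hcoc))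
      as [lv [le Hw]]. exists (lv, le). exact Hw. }
  set (A := fun w => sumR (fun v => PI * inv_card (stabV D (stab_comp D w) v)) (fst (g w))).
  set (B := fun w =>
    sumR (fun e => (PI - angle D e) * inv_card (stabE D (stab_comp D w) e)) (snd (g w))).
  assert (HV : sumR (fun v => PI * inv_card (stabV D allH v)) rv = sumR A reps).
  { exact (sumR_stab_components D (actV D) (fun x => x) (actV1 _ D) (actVM _ D)
      (fun _ _ => eq_refl) reps rv (fun w => fst (g w)) Hreps Hrv
      (fun w _ => proj1 (Hg w)) (fun _ => PI) (fun _ _ => eq_refl)). }
  assert (HE : sumR (fun e => (PI - angle D e) * inv_card (stabE D allH e)) re = sumR B reps).
  { exact (sumR_stab_components D (actE D) (src D) (actE1 _ D) (actEM _ D)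
      (act_src _ D) reps re (fun w => snd (g w)) Hreps Hre
      (fun w _ => proj1 (proj2 (Hg w))) (fun e => PI - angle D e)
      (fun h e => f_equal _ (angle_inv _ D h e))). }
  transitivity (sumR (fun w => B w - A w) reps).
  - unfold kappa_cells. rewrite Hk. unfold kappa_reps. rewrite HV, HE, sumR_minus. ring.
  - apply sumR_ext_in. intros w _. unfold kappa_cells.
    rewrite (proj2 (proj2 (Hg w))). unfold kappa_reps, A, B. ring.
Qed.

End Kappa.

Theorem lemma7p1 (H : Group) (D : angled_graph H)
  (Hcoc : cocompact D allH (allV D) (allE D))
  (reps : list (V D)) (Hreps : component_orbit_reps D reps)
  (Hk : forall v, In v reps ->
     kappa D (stab_comp D v) (compV D v) (compE D v)
       <= PI * inv_card (stab_comp D v)) :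
  forall v, In v reps ->
    kappa D allH (allV D) (allE D)
      <= kappa D (stab_comp D v) (compV D v) (compE D v).
Proof.
  intros v Hv.
  assert (Hnonpos : forall w, In w reps ->
            kappa_cells D (stab_comp D w) (compV D w) (compE D w) <= 0).
  { intros w Hw. specialize (Hk w Hw). unfold kappa_cells.
    pose proof (inv_card_nonneg (stab_comp D w)). pose proof PI_RGT_0. nra. }
  pose proof (kappa_cells_components D reps Hcoc Hreps) as Hsum.
  pose proof (sumR_le_term _ reps v Hnonpos Hv) as Hle.
  assert (Hcard : 2 * PI * inv_card (@allH H) <= 2 * PI * inv_card (stab_comp D v)).
  { pose proof PI_RGT_0. apply Rmult_le_compat_l; [lra|].
    exact (inv_card_full_le (stab_comp D v) (gone H) (stab_comp_one D v)). }
  unfold kappa_cells in Hsum, Hle. lra.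
Qed.
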